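(* Fix $c_0>0$, $\alpha_0\in(0,1/2)$, $\nu_2>0$ and $\sigma_1>0$. For every $t>0$ and every $\theta\in(-c_0,c_0)$, $$\omega\{\theta,\sigma_1,\nu_2,t,c(t,\nu_2)\}\;\le\;\omega\{\theta,\sigma_1,\nu_2,0,c(0)\}.$$ That is, among all tests with rejection region $\{t\widehat\sigma_1-c<\widehat\theta<c-t\widehat\sigma_1\}$ whose size (rejection probability at $\theta=c_0$) equals $\alpha_0$, the one with $t=0$ (rejection region $|\widehat\theta|<c(0)$) has the largest power at every $\theta\in(-c_0,c_0)$.
   Context: Univariate setting. Let $\sigma_1>0$, $\nu_2>0$. For $\theta\in\mathbb R$, $s>0$, $t\ge 0$, $c>0$, define the rejection probability $$\omega(\theta,s,\nu_2,t,c)=\Pr\big(t\widehat\sigma_1-c<\widehat\theta<c-t\widehat\sigma_1\big),$$ computed when $\widehat\theta\sim\mathcal N(\theta,s^2)$ and $\widehat\sigma_1>0$ are independent with $\nu_2\widehat\sigma_1^2/s^2\sim\chi^2_{\nu_2}$. In particular $\omega(\theta,s,\nu_2,0,c)=\Phi\big((c-\theta)/s\big)-\Phi\big((-c-\theta)/s\big)$, with $\Phi$ the standard normal CDF. For each fixed $t\ge0$, the map $c\mapsto\omega(c_0,s,\nu_2,t,c)$ is strictly increasing on $(0,\infty)$, tends to $0$ as $c\to0$ and to $1$ as $c\to\infty$. Denote by $c(t,\nu_2)$ the unique $c>0$ with $\omega(c_0,\sigma_1,\nu_2,t,c)=\alpha_0$, and write $c(0)=c(0,\nu_2)$ for the case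 $t=0$. *)

From HB Require Import structures.
From mathcomp Require Import all_boot all_order all_algebra.
From mathcomp Require Import all_classical all_reals all_analysis.
Set Implicit Arguments. Unset Strict Implicit. Unset Printing Implicit Defensive.
Import Order.TTheory GRing.Theory Num.Def Num.Theory.
Import numFieldNormedType.Exports.
Local Open Scope classical_set_scope.
Local Open Scope ring_scope.

Definition pos_half_line {R : realType} : set R := `]0, +oo[%classic.

Definition chi2_kernel {R : realType} (nu u : R) : R :=
  u `^ (nu / 2 - 1) * expR (- u / 2).

(* normalizing constant  = 2^(nu/2) Gamma(nu/2) *)
Definition chi2_const {R : realType} (nu : R) : R :=
  fine (\int[lebesgue_measure]_(u in pos_half_line) (chi2_kernel nu u)%:E)%E.

Definition chi2_pdf {R : realType} (nu u : R) : R :=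
  if 0 < u then chi2_kernel nu u / chi2_const nu else 0.

(* sigma1_hat as a function of U := nu * sigma1_hat^2 / s^2 ~ chi2(nu),
   with sigma1_hat > 0 *)
Definition sigma_hat {R : realType} (s nu u : R) : R := s * Num.sqrt (u / nu).

Definition accept_region {R : realType} (t c sh : R) : set R :=
  [set x : R | t * sh - c < x < c - t * sh].

(* omega(theta, s, nu, t, c) = Pr(t sigma_hat - c < theta_hat < c - t sigma_hat)
   with theta_hat ~ N(theta, s^2) independent of sigma_hat;
   computed by integrating over the law of U (independence = product law). *)
Definition omega {R : realType} (theta s nu t c : R) : R :=
  fine (\int[lebesgue_measure]_(u in pos_half_line)
    ((chi2_pdf nu u)%:E *
     normal_prob theta s
       (accept_region t c (sigma_hat s nu u))))%E.

From HB Require Import structures.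
From mathcomp Require Import all_boot all_order all_algebra.
From mathcomp Require Import all_classical all_reals all_analysis.
From mathcomp Require Import measurable_realfun.
From mathcomp Require Import ring lra.
Import Order.TTheory GRing.Theory Num.Def Num.Theory.
Import numFieldNormedType.Exports.
Local Open Scope classical_set_scope.
Local Open Scope ring_scope.

(* |theta_hat| has the folded normal density q_m(x) = phi_m(x) + phi_m(-x) on
   [0, oo).  For |theta| <= c0 the ratio q_theta / q_c0 is nonincreasing (after
   expanding the Gaussians this is the monotonicity of cosh on [0, oo)), so by
   the Neyman-Pearson argument, with k = q_theta(c) / q_c0(c), the map
   h |-> P_theta(|theta_hat| < h) - k P_c0(|theta_hat| < h) is maximal at h = c.
   Take c = c(0) and h = c(t) - t sigma1_hat, and average over sigma1_hat: the
   two size constraints make the k-terms equal. *)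

Section symmetric_exponential.
Context {R : realType}.

Definition expR_sym (a : R) : R := expR a + expR (- a).

Lemma expR_symN (a : R) : expR_sym (- a) = expR_sym a.
Proof. by rewrite /expR_sym opprK addrC. Qed.

Lemma expR_sym_abs (a : R) : expR_sym `|a| = expR_sym a.
Proof. by case: (ler0P a) => _; rewrite ?expR_symN. Qed.

(* With P = e^|u| and A = e^v, 1 <= P <= A and
   (A + 1/A) - (P + 1/P) = (A - P)(1 - 1/(AP)). *)
Lemma expR_sym_le (u v : R) : `|u| <= v -> expR_sym u <= expR_sym v.
Proof.
move=> uv; rewrite -expR_sym_abs /expR_sym !expRN -subr_ge0.
have P1 : 1 <= expR `|u| by rewrite -expR0 ler_expR.
have PA : expR `|u| <= expR v by rewrite ler_expR.
move: P1 PA; set P := expR `|u|; set A := expR v => P1 PA.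
have [P0 A0] : P != 0 /\ A != 0 by split; apply/eqP; lra.
have -> : A + A^-1 - (P + P^-1) = (A - P) * (1 - (A * P)^-1).
  by field; rewrite P0 A0.
have AP1 : (A * P)^-1 <= 1 by rewrite invf_le1 //; nra.
by rewrite mulr_ge0 // subr_ge0.
Qed.

End symmetric_exponential.

Section folded_normal.
Context {R : realType}.
Implicit Types (m s x y : R).

Lemma normal_fun_mul m m' s x y : s != 0 ->
  normal_fun m s x * normal_fun m' s y =
  expR (- ((x ^+ 2 + y ^+ 2) + (m ^+ 2 + m' ^+ 2)) / (s ^+ 2 *+ 2)) *
  expR ((x * m + y * m') / s ^+ 2).
Proof.
by move=> s0; rewrite /normal_fun -!expRD; congr expR; rewrite -mulr_natr; field.
Qed.

Lemma normal_fun_sym_mul m m' s x y : s != 0 ->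
  (normal_fun m s x + normal_fun m s (- x)) *
  (normal_fun m' s y + normal_fun m' s (- y)) =
  expR (- ((x ^+ 2 + y ^+ 2) + (m ^+ 2 + m' ^+ 2)) / (s ^+ 2 *+ 2)) *
  (expR_sym ((x * m + y * m') / s ^+ 2) + expR_sym ((x * m - y * m') / s ^+ 2)).
Proof.
move=> s0; rewrite mulrDl !mulrDr [normal_fun m s (- x) * _ + _]addrC addrACA.
rewrite (normal_fun_mul m m' s x y) // (normal_fun_mul m m' s (- x) (- y)) //.
rewrite (normal_fun_mul m m' s x (- y)) // (normal_fun_mul m m' s (- x) y) // !sqrrN.
by congr (_ * expR _ + _ * expR _ + (_ * expR _ + _ * expR _)); ring.
Qed.

Lemma ler_norm_cross x y m m' : `|m| <= m' -> 0 <= y <= x ->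
  `|x * m + y * m'| <= y * m + x * m'.
Proof.
rewrite ler_norml => /andP[mm' m'm] /andP[y0 yx].
have p1 : 0 <= (m' - m) * (x - y) by apply: mulr_ge0; lra.
have p2 : 0 <= (m' + m) * (x + y) by apply: mulr_ge0; lra.
by rewrite ler_norml; apply/andP; split; lra.
Qed.

Definition folded_normal_pdf m s x := normal_pdf m s x + normal_pdf m s (- x).

Lemma folded_normal_pdfE m s x : s != 0 ->
  folded_normal_pdf m s x = normal_peak s * (normal_fun m s x + normal_fun m s (- x)).
Proof. by move=> s0; rewrite /folded_normal_pdf !normal_pdfE //= mulrDr. Qed.

Lemma folded_normal_pdf_mlr m m' s x y : s != 0 -> `|m| <= m' -> 0 <= y <= x ->
  folded_normal_pdf m s x * folded_normal_pdf m' s y <=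
  folded_normal_pdf m s y * folded_normal_pdf m' s x.
Proof.
move=> s0 mm' yx; rewrite !folded_normal_pdfE //.
rewrite [X in X <= _]mulrACA [X in _ <= X]mulrACA.
rewrite ler_wpM2l ?mulr_ge0 ?normal_peak_ge0 //.
rewrite !normal_fun_sym_mul // [y ^+ 2 + _]addrC ler_wpM2l ?expR_ge0 //.
have scale (a b : R) : `|a| <= b -> `|a / s ^+ 2| <= b / s ^+ 2.
  by move=> ab; rewrite normrM [`|_^-1|]ger0_norm ?ler_wpM2r ?invr_ge0 ?sqr_ge0.
rewrite -[X in _ <= _ + X]expR_symN -[- (_ / s ^+ 2)]mulNr opprB.
apply: lerD; apply/expR_sym_le/scale; first exact: ler_norm_cross.
move: (ler_norm_cross x y (- m) m'); rewrite normrN => /(_ mm' yx).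
by rewrite !ler_norml !mulrN => /andP[h1 h2]; apply/andP; split; lra.
Qed.

End folded_normal.

Section neyman_pearson.
Context {R : realType}.
Local Notation mu := (@lebesgue_measure R).

Lemma integral_itv_split (F : R -> R) (l a b : R) : measurable_fun setT F ->
  l <= a <= b ->
  (\int[mu]_(x in `[l, b]) (F x)%:E =
   \int[mu]_(x in `[l, a]) (F x)%:E + \int[mu]_(x in `]a, b]) (F x)%:E)%E.
Proof.
move=> mF /andP[la ab].
rewrite (@itv_bndbnd_setU _ _ _ (BRight a)) ?bnd_simp //.
rewrite integral_setU //=; first by apply/measurable_funTS/measurable_EFinP.
rewrite disj_set2E; apply/eqP/seteqP; split => x //=.
by rewrite !in_itv /= => -[/andP[_ xa] /andP[ax _]]; lra.
Qed.

Variables (f g : R -> R) (c : R).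
Hypotheses (f_ge0 : forall x, 0 <= f x) (g_ge0 : forall x, 0 <= g x).
Hypotheses (mf : measurable_fun setT f) (mg : measurable_fun setT g).
Hypotheses (c_ge0 : 0 <= c) (gc_gt0 : 0 < g c).
Hypothesis fg_mlr : forall x y, 0 <= y <= x -> f x * g y <= f y * g x.

Let k := f c / g c.

Let k_ge0 : 0 <= k. Proof. by rewrite divr_ge0. Qed.

Let integral_scaleE (A : set R) : measurable A ->
  (k%:E * \int[mu]_(x in A) (g x)%:E = \int[mu]_(x in A) (k * g x)%:E)%E.
Proof.
move=> mA; rewrite -ge0_integralZl_EFin //; first by move=> x _; rewrite lee_fin.
by apply/measurable_funTS/measurable_EFinP.
Qed.

Let measurable_fun_EFin (F : R -> R) (A : set R) : measurable_fun setT F ->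
  measurable_fun A (fun x => (F x)%:E).
Proof. by move=> mF; apply/measurable_funTS/measurable_EFinP. Qed.

Let integral_above_c (a b : R) : c <= a ->
  (\int[mu]_(x in `]a, b]) (f x)%:E <= k%:E * \int[mu]_(x in `]a, b]) (g x)%:E)%E.
Proof.
move=> ca; rewrite integral_scaleE //; apply: ge0_le_integral => //.
- by move=> x _; rewrite lee_fin.
- exact: measurable_fun_EFin.
- by apply: measurable_fun_EFin; apply: measurable_funM.
move=> x; rewrite /= in_itv /= => /andP[ax _]; rewrite lee_fin.
have := fg_mlr x c; rewrite c_ge0 /= => /(_ ltac:(lra)).
by rewrite /k mulrAC ler_pdivlMr.
Qed.

Let integral_below_c (a b : R) : 0 <= a -> b <= c ->
  (k%:E * \int[mu]_(x in `]a, b]) (g x)%:E <= \int[mu]_(x in `]a, b]) (f x)%:E)%E.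
Proof.
move=> a0 bc; rewrite integral_scaleE //; apply: ge0_le_integral => //.
- by move=> x _; rewrite lee_fin mulr_ge0.
- by apply: measurable_fun_EFin; apply: measurable_funM.
- exact: measurable_fun_EFin.
move=> x; rewrite /= in_itv /= => /andP[ax xb]; rewrite lee_fin.
have x0 : 0 <= x by lra.
have := fg_mlr c x; rewrite x0 /= => /(_ ltac:(lra)).
by rewrite /k mulrAC ler_pdivrMr.
Qed.

Let integral_EFin_ge0 (F : R -> R) (A : set R) : (forall x, 0 <= F x) ->
  (0 <= \int[mu]_(x in A) (F x)%:E)%E.
Proof. by move=> F0; apply: integral_ge0 => x _; rewrite lee_fin. Qed.

Lemma neyman_pearson_itv (h : R) : 0 <= h ->
  (\int[mu]_(x in `[0%R, h]) (f x)%:E + k%:E * \int[mu]_(x in `[0%R, c]) (g x)%:E <=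
   \int[mu]_(x in `[0%R, c]) (f x)%:E + k%:E * \int[mu]_(x in `[0%R, h]) (g x)%:E)%E.
Proof.
move=> h0; have [ch|hc] := leP c h.
- have sc : 0 <= c <= h by rewrite c_ge0.
  rewrite (@integral_itv_split f _ _ _ mf sc) (@integral_itv_split g _ _ _ mg sc).
  rewrite [in X in (_ <= X)%E]ge0_muleDr; [|exact: integral_EFin_ge0 g_ge0..].
  rewrite -addeA; apply: leeD => //.
  by rewrite addeC; apply: leeD => //; exact: integral_above_c.
- have sh : 0 <= h <= c by rewrite h0 ltW.
  rewrite (@integral_itv_split f _ _ _ mf sh) (@integral_itv_split g _ _ _ mg sh).
  rewrite [in X in (X <= _)%E]ge0_muleDr; [|exact: integral_EFin_ge0 g_ge0..].
  rewrite -addeA; apply: leeD => //.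
  by rewrite addeC; apply: leeD => //; exact: integral_below_c.
Qed.

End neyman_pearson.

Section folded_normal_prob.
Context {R : realType}.
Local Notation mu := (@lebesgue_measure R).
Implicit Types (m s h : R).

Lemma measurable_folded_normal_pdf m s : measurable_fun setT (folded_normal_pdf m s).
Proof.
apply: measurable_funD; first exact: measurable_normal_pdf.
by apply: measurableT_comp => //; exact: measurable_normal_pdf.
Qed.

Lemma folded_normal_pdf_ge0 m s x : 0 <= folded_normal_pdf m s x.
Proof. by rewrite addr_ge0 ?normal_pdf_ge0. Qed.

Lemma folded_normal_pdf_gt0 m s x : s != 0 -> 0 < folded_normal_pdf m s x.
Proof.
move=> s0; rewrite folded_normal_pdfE // mulr_gt0 ?normal_peak_gt0 //.
by rewrite addr_gt0 // expR_gt0.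
Qed.

Lemma normal_prob_sym_itv m s h : s != 0 -> 0 <= h ->
  normal_prob m s `](- h), h[ = (\int[mu]_(x in `[0%R, h]) (folded_normal_pdf m s x)%:E)%E.
Proof.
move=> s0 h0.
have mpdf (D : set R) : measurable_fun D (fun x => (normal_pdf m s x)%:E).
  by apply/measurable_funTS/measurable_EFinP; exact: measurable_normal_pdf.
have mpdfN (D : set R) : measurable_fun D (fun x => (normal_pdf m s (- x))%:E).
  apply/measurable_funTS/measurable_EFinP.
  by apply: measurableT_comp => //; exact: measurable_normal_pdf.
have -> : `](- h), h[%classic = `](- h), 0] `|` `]0, h[ :> set R.
  apply/seteqP; split => x /=; rewrite !in_itv /=.
  - by move=> /andP[hx xh]; case: (lerP x 0) => x0; [left|right]; rewrite ?hx ?xh.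
  - by case=> /andP[? ?]; apply/andP; split; lra.
rewrite /normal_prob integral_setU //=; [|exact: mpdf|]; last first.
  rewrite disj_set2E; apply/eqP/seteqP; split => x //=.
  by rewrite !in_itv /= => -[/andP[_ x0] /andP[x0' _]]; lra.
have -> : (\int[mu]_(x in `](- h)%R, 0%R]) (normal_pdf m s x)%:E =
          \int[mu]_(x in `[(- h)%R, (- 0)%R]) (normal_pdf m s x)%:E)%E.
  rewrite oppr0 (@integral_itv_bndoo _ _ _ _ false false) //.
  by rewrite [RHS](@integral_itv_bndoo _ _ _ _ true false).
rewrite integration_by_substitution_oppr //; last first.
  by apply: continuous_subspaceT; exact: continuous_normal_pdf.
rewrite (@integral_itv_bndoo _ _ _ _ false true) //.
rewrite -[X in (_ + X)%E](@integral_itv_bndoo _ _ _ _ true false) //.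
rewrite addeC -ge0_integralD //; [|exact: mpdf| |exact: mpdfN].
all: by move=> x _; rewrite lee_fin normal_pdf_ge0.
Qed.

Definition folded_prob m s h : R := fine (normal_prob m s `](- h), h[).

Lemma folded_probE m s h : normal_prob m s `](- h), h[ = (folded_prob m s h)%:E.
Proof. by rewrite /folded_prob fineK // fin_num_measure. Qed.

Lemma folded_prob_ge0 m s h : 0 <= folded_prob m s h.
Proof. by rewrite /folded_prob fine_ge0. Qed.

Lemma folded_prob_le1 m s h : folded_prob m s h <= 1.
Proof. by rewrite -lee_fin -folded_probE probability_le1. Qed.

Lemma folded_prob_le m s h1 h2 : h1 <= h2 -> folded_prob m s h1 <= folded_prob m s h2.
Proof.
move=> h12; rewrite -lee_fin -!folded_probE; apply: le_measure; rewrite ?inE //.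
by move=> x /=; rewrite !in_itv /= => /andP[? ?]; apply/andP; split; lra.
Qed.

Lemma folded_prob_max0 m s h : folded_prob m s h = folded_prob m s (maxr h 0).
Proof.
have [//|h0] := leP 0 h; rewrite /folded_prob oppr0 !set_itv_ge //.
all: by rewrite bnd_simp -leNgt; lra.
Qed.

Lemma folded_prob_neyman_pearson m m' s c h : s != 0 -> `|m| <= m' -> 0 <= c ->
  folded_prob m s h + folded_normal_pdf m s c / folded_normal_pdf m' s c * folded_prob m' s c <=
  folded_prob m s c + folded_normal_pdf m s c / folded_normal_pdf m' s c * folded_prob m' s h.
Proof.
move=> s0 mm' c0; rewrite (folded_prob_max0 m s h) (folded_prob_max0 m' s h).
rewrite -lee_fin !EFinD !EFinM -!folded_probE !normal_prob_sym_itv ?le_max ?lexx ?orbT //.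
apply: neyman_pearson_itv => //.
- exact: folded_normal_pdf_ge0.
- exact: folded_normal_pdf_ge0.
- exact: measurable_folded_normal_pdf.
- exact: measurable_folded_normal_pdf.
- exact: folded_normal_pdf_gt0.
- by move=> x y; apply: folded_normal_pdf_mlr.
- by rewrite le_max lexx orbT.
Qed.

End folded_normal_prob.

Section integral_affine_inequality.
Context d (T : measurableType d) (R : realType) (mu : {measure set T -> \bar R}).
Variables (D : set T) (P : T -> R).
Hypotheses (mD : measurable D) (P_ge0 : forall u, 0 <= P u).
Hypotheses (mP : measurable_fun D P) (P_le1 : (\int[mu]_(u in D) (P u)%:E <= 1)%E).

Let integral_mulr_ge0 (f : T -> R) : (forall u, 0 <= f u) ->
  (0 <= \int[mu]_(u in D) (P u * f u)%:E)%E.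
Proof. by move=> f0; apply: integral_ge0 => u _; rewrite lee_fin mulr_ge0. Qed.

Lemma integral_mulr_fin_num (f : T -> R) : (forall u, 0 <= f u <= 1) ->
  measurable_fun D f -> (\int[mu]_(u in D) (P u * f u)%:E)%E \is a fin_num.
Proof.
move=> f01 mf; have f0 u : 0 <= f u by case/andP: (f01 u).
rewrite ge0_fin_numE ?integral_mulr_ge0 //.
apply: le_lt_trans (ltry 1); apply: le_trans P_le1.
apply: ge0_le_integral => //.
- by move=> u _; rewrite lee_fin mulr_ge0.
- exact/measurable_EFinP/measurable_funM.
- exact/measurable_EFinP.
by move=> u _; rewrite lee_fin ler_piMr //; case/andP: (f01 u).
Qed.

Let integral_mulr_affine (f g : T -> R) (l : R) : 0 <= l ->
  (forall u, 0 <= f u) -> (forall u, 0 <= g u) ->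
  measurable_fun D f -> measurable_fun D g ->
  (\int[mu]_(u in D) (P u * (f u + l * g u))%:E =
   \int[mu]_(u in D) (P u * f u)%:E + l%:E * \int[mu]_(u in D) (P u * g u)%:E)%E.
Proof.
move=> l0 f0 g0 mf mg.
rewrite (eq_integral (fun u => (P u * f u)%:E + l%:E * (P u * g u)%:E)%E); last first.
  by move=> u _; rewrite -EFinM -EFinD mulrDr mulrCA.
rewrite ge0_integralD //; first last.
- by apply: emeasurable_funM => //; apply/measurable_EFinP/measurable_funM.
- by move=> u _; rewrite -EFinM lee_fin !mulr_ge0.
- exact/measurable_EFinP/measurable_funM.
- by move=> u _; rewrite lee_fin mulr_ge0.
rewrite ge0_integralZl_EFin //.
- by move=> u _; rewrite lee_fin mulr_ge0.
- exact/measurable_EFinP/measurable_funM.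
Qed.

Lemma fine_integral_mulr_affine_le (f1 g1 f2 g2 : T -> R) (l : R) : 0 <= l ->
  (forall u, [&& 0 <= f1 u <= 1, 0 <= g1 u <= 1, 0 <= f2 u <= 1 & 0 <= g2 u <= 1]) ->
  measurable_fun D f1 -> measurable_fun D g1 ->
  measurable_fun D f2 -> measurable_fun D g2 ->
  (forall u, f1 u + l * g1 u <= f2 u + l * g2 u) ->
  fine (\int[mu]_(u in D) (P u * f1 u)%:E)%E +
    l * fine (\int[mu]_(u in D) (P u * g1 u)%:E)%E <=
  fine (\int[mu]_(u in D) (P u * f2 u)%:E)%E +
    l * fine (\int[mu]_(u in D) (P u * g2 u)%:E)%E.
Proof.
move=> l0 b01 mf1 mg1 mf2 mg2 fg.
have [f1b g1b f2b g2b] : [/\ forall u, 0 <= f1 u <= 1, forall u, 0 <= g1 u <= 1,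
    forall u, 0 <= f2 u <= 1 & forall u, 0 <= g2 u <= 1].
  by split=> u; case/and4P: (b01 u).
have f0 (f : T -> R) : (forall u, 0 <= f u <= 1) -> forall u, 0 <= f u.
  by move=> fb u; case/andP: (fb u).
rewrite -lee_fin !EFinD !EFinM !fineK ?integral_mulr_fin_num //.
rewrite -!integral_mulr_affine //; try by apply: f0.
apply: ge0_le_integral => //.
- by move=> u _; rewrite lee_fin mulr_ge0 // addr_ge0 ?mulr_ge0 ?(f0 _ f1b) ?(f0 _ g1b).
- by apply/measurable_EFinP/measurable_funM => //; apply/measurable_funD => //; apply/measurable_funM.
- by apply/measurable_EFinP/measurable_funM => //; apply/measurable_funD => //; apply/measurable_funM.
by move=> u _; rewrite lee_fin ler_wpM2l.
Qed.

End integral_affine_inequality.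

Section chi2_mixture.
Context {R : realType}.
Local Notation mu := (@lebesgue_measure R).
Implicit Types (nu s u : R).

Lemma measurable_pos_half_line : measurable (@pos_half_line R).
Proof. exact: measurable_itv. Qed.

Lemma chi2_kernel_ge0 nu u : 0 <= chi2_kernel nu u.
Proof. by rewrite mulr_ge0 ?powR_ge0 ?expR_ge0. Qed.

Lemma measurable_chi2_kernel nu : measurable_fun setT (chi2_kernel nu).
Proof.
apply: measurable_funM; first exact: measurable_powR.
by apply: measurableT_comp => //; apply: measurable_funM.
Qed.

Lemma chi2_pdf_ge0 nu u : 0 <= chi2_pdf nu u.
Proof.
rewrite /chi2_pdf; case: ifP => // _; rewrite divr_ge0 ?chi2_kernel_ge0 //.
by rewrite fine_ge0 // integral_ge0 // => x _; rewrite lee_fin chi2_kernel_ge0.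
Qed.

Lemma chi2_pdfE nu u : pos_half_line u -> chi2_pdf nu u = (chi2_const nu)^-1 * chi2_kernel nu u.
Proof. by rewrite /pos_half_line /= in_itv /= andbT /chi2_pdf mulrC => ->. Qed.

Lemma measurable_chi2_pdf nu : measurable_fun pos_half_line (chi2_pdf nu).
Proof.
apply: (eq_measurable_fun (fun u => (chi2_const nu)^-1 * chi2_kernel nu u)).
  by move=> u; rewrite inE => /chi2_pdfE ->.
by apply/measurable_funTS/measurable_funM => //; exact: measurable_chi2_kernel.
Qed.

(* Equality holds unless the kernel has infinite mass, in which case [chi2_const]
   is [fine +oo = 0] and [chi2_pdf] vanishes. *)
Lemma chi2_pdf_integral_le1 nu :
  (\int[mu]_(u in pos_half_line) (chi2_pdf nu u)%:E <= 1)%E.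
Proof.
under eq_integral => u /[1!inE] /chi2_pdfE -> do rewrite EFinM.
have mD := measurable_pos_half_line.
rewrite ge0_integralZl_EFin //; last 3 first.
- by move=> u _; rewrite lee_fin chi2_kernel_ge0.
- by apply/measurable_funTS/measurable_EFinP; exact: measurable_chi2_kernel.
- by rewrite invr_ge0 fine_ge0 // integral_ge0 // => u _; rewrite lee_fin chi2_kernel_ge0.
rewrite /chi2_const.
have : (0 <= \int[mu]_(u in pos_half_line) (chi2_kernel nu u)%:E)%E.
  by apply: integral_ge0 => u _; rewrite lee_fin chi2_kernel_ge0.
case: (\int[mu]_(u in pos_half_line) _)%E => [r _| |] //=; last by rewrite invr0 mul0e.
by rewrite -EFinM lee_fin; have [->|r0] := eqVneq r 0; rewrite ?mulr0 ?mulVf.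
Qed.

Lemma sigma_hat_le s nu u1 u2 : 0 <= s -> 0 < nu -> u1 <= u2 ->
  sigma_hat s nu u1 <= sigma_hat s nu u2.
Proof.
move=> s0 nu0 u12.
by rewrite /sigma_hat ler_wpM2l // ler_wsqrtr // ler_pM2r ?invr_gt0.
Qed.

Lemma measurable_folded_prob_sigma_hat m s nu t c : 0 <= s -> 0 < nu -> 0 <= t ->
  measurable_fun pos_half_line (fun u => folded_prob m s (c - t * sigma_hat s nu u)).
Proof.
move=> s0 nu0 t0.
apply: nonincreasing_measurable; first exact: measurable_pos_half_line.
move=> u1 u2 u12; apply: folded_prob_le.
by rewrite lerD2l lerN2 ler_wpM2l // sigma_hat_le.
Qed.

Lemma omegaE m s nu t c : omega m s nu t c =
  fine (\int[mu]_(u in pos_half_line)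
          (chi2_pdf nu u * folded_prob m s (c - t * sigma_hat s nu u))%:E)%E.
Proof.
rewrite /omega; congr fine; apply: eq_integral => u _.
by rewrite EFinM -folded_probE /accept_region opprB.
Qed.

End chi2_mixture.

Theorem theorem1 (R : realType) (c0 alpha0 nu2 sigma1 : R) :
  0 < c0 -> 0 < alpha0 < 1 / 2 -> 0 < nu2 -> 0 < sigma1 ->
  forall (t theta ct cz : R),
    0 < t -> - c0 < theta < c0 ->
    0 < ct -> omega c0 sigma1 nu2 t ct = alpha0 ->
    0 < cz -> omega c0 sigma1 nu2 0 cz = alpha0 ->
    omega theta sigma1 nu2 t ct <= omega theta sigma1 nu2 0 cz.
Proof.
move=> _ _ nu0 s0 t theta ct cz t0 theta_c0 _ size_t cz0 size_0.
have s_neq0 : sigma1 != 0 by rewrite gt_eqF.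
have theta_le : `|theta| <= c0 by rewrite ler_norml; case/andP: theta_c0 => ? ?; lra.
set k := folded_normal_pdf theta sigma1 cz / folded_normal_pdf c0 sigma1 cz.
suff : omega theta sigma1 nu2 t ct + k * omega c0 sigma1 nu2 0 cz <=
       omega theta sigma1 nu2 0 cz + k * omega c0 sigma1 nu2 t ct.
  by rewrite size_t size_0 lerD2r.
rewrite !omegaE; apply: fine_integral_mulr_affine_le.
- exact: measurable_pos_half_line.
- exact: chi2_pdf_ge0.
- exact: measurable_chi2_pdf.
- exact: chi2_pdf_integral_le1.
- by rewrite divr_ge0 ?folded_normal_pdf_ge0.
- by move=> u; rewrite !folded_prob_ge0 !folded_prob_le1.
1,4: exact: measurable_folded_prob_sigma_hat (ltW s0) nu0 (ltW t0).
1,2: exact: measurable_folded_prob_sigma_hat (ltW s0) nu0 (lexx 0).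
move=> u; rewrite mul0r subr0.
by apply: folded_prob_neyman_pearson => //; exact: ltW.
Qed.
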